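(* Let $f \colon \mathbb{R}^d \to \mathbb{R}$ be $L$-smooth (possibly non-convex) and bounded below, and assume access to unbiased stochastic gradients $g(\omega)$, $\mathbb{E}\, g(\omega) = \nabla f(\omega)$, whose variance is bounded by $\sigma^2$. Then the Lookahead optimizer with hyperparameters $(k,\alpha)$, $k \ge 1$ and $\alpha \in (0,1]$, with its SGD stepsize $\gamma$ chosen appropriately (depending on $\alpha$), reaches $\mathbb{E}\|\nabla f(\omega_{\rm out})\|^2 \le \varepsilon$ after at most $$\mathcal{O}\left(\frac{\sigma^2}{\varepsilon^2} + \frac{1}{\varepsilon} + \frac{1-\alpha}{\alpha}\left(\frac{\sigma\sqrt{k-1}}{\varepsilon^{3/2}} + \frac{k}{\varepsilon}\right)\right)$$ iterations (stochastic gradient evaluations), where $\omega_{\rm out}$ denotes an iterate of the algorithm chosen uniformly at random.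
   Context: The Lookahead optimizer for minimizing $f$ maintains ''slow'' weights $\omega_t$. At each outer step $t$ it sets $\tilde\omega_{t} \leftarrow \omega_t$, performs $k$ SGD steps $\tilde\omega_{t+i} = \tilde\omega_{t+i-1} - \gamma\, g(\tilde\omega_{t+i-1})$, $i=1,\dots,k$ (so $\tilde\omega_{t+k} = \tilde\omega_t - \gamma\sum_{i=1}^k g(\tilde\omega_{t+i-1})$), and then updates $\omega_{t+1} = \omega_t + \alpha(\tilde\omega_{t+k} - \omega_t)$. Iterations are counted as the total number of stochastic gradient evaluations ($k$ per outer step). The $\mathcal{O}$-notation hides constants depending on $L$ and on the initial optimality gap $f(\omega_0) - \inf f$. The stepsize $\gamma$ is assumed to be optimally tuned for each choice of $\alpha$. *)

From mathcomp Require Import all_boot all_order all_algebra.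
From mathcomp Require Import all_classical all_reals all_analysis.
Import Order.TTheory GRing.Theory Num.Theory.

Set Implicit Arguments.
Unset Strict Implicit.
Unset Printing Implicit Defensive.

Local Open Scope ring_scope.
Local Open Scope classical_set_scope.

Section LookaheadDefs.
Variable R : realType.
Variable d : nat.

Definition dotv (u v : 'rV[R]_d) : R := \sum_(i < d) u ord0 i * v ord0 i.
Definition sqnorm (v : 'rV[R]_d) : R := dotv v v.
Definition enorm (v : 'rV[R]_d) : R := Num.sqrt (sqnorm v).

Definition is_gradient (f : 'rV[R]_d -> R) (gradf : 'rV[R]_d -> 'rV[R]_d) : Prop :=
  forall w : ('rV[R]_d : normedModType R),
    differentiable f w /\ forall h : 'rV[R]_d, 'd f w h = dotv (gradf w) h.

Definition L_smooth (L : R) (f : 'rV[R]_d -> R) (gradf : 'rV[R]_d -> 'rV[R]_d) : Prop :=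
  is_gradient f gradf /\
  forall x y : 'rV[R]_d, enorm (gradf x - gradf y) <= L * enorm (x - y).

Definition vopen (B : set 'rV[R]_d) : Prop := @open ('rV[R]_d : normedModType R) B.

(* Product sigma-algebra on Xi * R^d generated by rectangles
   (measurable set) x (open set), i.e. (sigma-algebra of Xi) (x) Borel(R^d). *)
Definition prod_gen (dX : measure_display) (Xi : measurableType dX)
  : set (set (Xi * 'rV[R]_d)) :=
  [set A `*` B | A in [set A : set Xi | measurable A] & B in [set B | vopen B]].

(* State s = (slow weights omega, current fast weights w~).
   n = number of gradient evaluations performed before this one. *)
Definition la_step (Xi : Type) (G : 'rV[R]_d -> Xi -> 'rV[R]_d)
  (k : nat) (alpha gamma : R) (n : nat) (s : 'rV[R]_d * 'rV[R]_d) (xi : Xi)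
  : 'rV[R]_d * 'rV[R]_d :=
  let w' := s.2 - gamma *: G s.2 xi in
  if (k %| n.+1)%N then
    let om := s.1 + alpha *: (w' - s.1) in (om, om)
  else (s.1, w').

(* la_expect mu G k alpha gamma h n m s =
   expectation of h(state after n further evaluations), starting from state s
   after m evaluations, each evaluation using a fresh independent sample
   xi ~ mu (iterated integrals = integral w.r.t. the product measure). *)
Fixpoint la_expect (dX : measure_display) (Xi : measurableType dX)
  (mu : probability Xi R) (G : 'rV[R]_d -> Xi -> 'rV[R]_d)
  (k : nat) (alpha gamma : R) (h : 'rV[R]_d * 'rV[R]_d -> \bar R)
  (n m : nat) (s : 'rV[R]_d * 'rV[R]_d) : \bar R :=
  match n with
  | 0 => h s
  | n'.+1 => (\int[mu]_xi la_expect mu G k alpha gamma h n' m.+1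
                               (la_step G k alpha gamma m s xi))%E
  end.

(* E ||grad f(omega_out)||^2 where omega_out is chosen uniformly at random
   among the T points w~_0, ..., w~_{T-1} at which the T stochastic gradients
   were evaluated, the run starting from omega_0 = w0. *)
Definition la_out_sqgrad (dX : measure_display) (Xi : measurableType dX)
  (mu : probability Xi R) (G : 'rV[R]_d -> Xi -> 'rV[R]_d)
  (gradf : 'rV[R]_d -> 'rV[R]_d)
  (k : nat) (alpha gamma : R) (w0 : 'rV[R]_d) (T : nat) : \bar R :=
  ((T%:R)^-1%:E *
   \sum_(n < T) la_expect mu G k alpha gamma
                  (fun s => (sqnorm (gradf s.2))%:E) n 0 (w0, w0))%E.

End LookaheadDefs.

(* The complexity bound (without the hidden constant). *)
Definition la_bound (R : realType) (sigma eps alpha : R) (k : nat) : R :=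
  sigma ^+ 2 / eps ^+ 2 + eps^-1
  + (1 - alpha) / alpha *
    (sigma * Num.sqrt (k.-1)%:R / (eps * Num.sqrt eps) + k%:R / eps).

From mathcomp Require Import all_boot all_order all_algebra.
From mathcomp Require Import all_classical all_reals all_analysis.
From mathcomp Require Import measurable_realfun ring lra.
Import Order.TTheory GRing.Theory Num.Theory.
Local Open Scope ring_scope.
Local Open Scope classical_set_scope.

(* Let [p = omega + alpha (w~ - omega)] be the point the slow weights would
   jump to if the inner loop stopped now, and [u = w~ - omega] the drift of the
   fast weights.  Every SGD step moves [p] by [- alpha gamma g], synchronising
   or not, so [p] runs SGD with stepsize [alpha gamma], but on gradients
   sampled at [w~ = p + (1 - alpha) u].  The potential
   [f p - inf f + beta_j |u|^2], where [j] is the position in the inner loop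
   and [beta_j] decreases linearly to [0] along it, pays for this mismatch: by
   L-smoothness and Young's inequality it decreases in expectation by
   [alpha gamma / 4 |grad f w~|^2] up to a variance term [nu = O(gamma^2 sigma^2)].
   Telescoping bounds the average of [E |grad f w~_n|^2] by
   [4 (Delta + T nu) / (alpha gamma T)], and [gamma = 1 / la_scale] makes each
   contribution at most [eps / 3] once [T > 12 Delta la_scale / (alpha eps)],
   which is of the order of [la_bound]. *)

Section Euclidean.
Context {R : realType} {d : nat}.
Implicit Types (u v w x : 'rV[R]_d) (a b : R).

Lemma dotvC u v : dotv u v = dotv v u.
Proof. by apply: eq_bigr => i _; rewrite mulrC. Qed.

Lemma dotvDl u v w : dotv (u + v) w = dotv u w + dotv v w.
Proof. by rewrite /dotv -big_split; apply: eq_bigr => i _; rewrite mxE mulrDl. Qed.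

Lemma dotvZl a u w : dotv (a *: u) w = a * dotv u w.
Proof. by rewrite /dotv mulr_sumr; apply: eq_bigr => i _; rewrite mxE mulrA. Qed.

Lemma dotvBl u v w : dotv (u - v) w = dotv u w - dotv v w.
Proof. by rewrite dotvDl -scaleN1r dotvZl mulN1r. Qed.

Lemma dotvDr u v w : dotv w (u + v) = dotv w u + dotv w v.
Proof. by rewrite dotvC dotvDl !(dotvC w). Qed.

Lemma dotvZr a u w : dotv w (a *: u) = a * dotv w u.
Proof. by rewrite dotvC dotvZl dotvC. Qed.

Lemma dotvBr u v w : dotv w (u - v) = dotv w u - dotv w v.
Proof. by rewrite dotvC dotvBl !(dotvC w). Qed.

Lemma sqnorm_ge0 u : 0 <= sqnorm u.
Proof. by apply: sumr_ge0 => i _; rewrite -expr2 sqr_ge0. Qed.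

Lemma sqnorm0 : sqnorm (0 : 'rV[R]_d) = 0.
Proof. by rewrite /sqnorm /dotv big1 // => i _; rewrite mxE mul0r. Qed.

Lemma sqnormD u v : sqnorm (u + v) = sqnorm u + 2 * dotv u v + sqnorm v.
Proof. by rewrite /sqnorm dotvDl !dotvDr (dotvC v u); ring. Qed.

Lemma sqnormB u v : sqnorm (u - v) = sqnorm u - 2 * dotv u v + sqnorm v.
Proof. by rewrite /sqnorm dotvBl !dotvBr (dotvC v u); ring. Qed.

Lemma sqnormZ a u : sqnorm (a *: u) = a ^+ 2 * sqnorm u.
Proof. by rewrite /sqnorm dotvZl dotvZr mulrA expr2. Qed.

Lemma dotv_young a b u v :
  - (2 * (a * b) * dotv u v) <= a ^+ 2 * sqnorm u + b ^+ 2 * sqnorm v.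
Proof.
have := sqnorm_ge0 (a *: u + b *: v).
by rewrite sqnormD !sqnormZ dotvZl dotvZr; lra.
Qed.

Lemma L_smooth_sqnorm_grad {L : R} {f gradf} u v : L_smooth L f gradf -> 0 <= L ->
  sqnorm (gradf u - gradf v) <= L ^+ 2 * sqnorm (u - v).
Proof.
move=> [_ lip] L0; have := lip u v; rewrite /enorm => le_norm.
rewrite -[sqnorm (gradf u - _)]sqr_sqrtr ?sqnorm_ge0 //.
rewrite -[sqnorm (u - v)]sqr_sqrtr ?sqnorm_ge0 // -exprMn.
by apply: lerXn2r; rewrite ?nnegrE ?mulr_ge0 ?sqrtr_ge0.
Qed.

Lemma is_derive_line {f gradf} x v (t : R) : is_gradient f gradf ->
  is_derive t 1 (fun s : R => f (s *: v + x)) (dotv (gradf (t *: v + x)) v).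
Proof.
move=> grad_f; have [df dfE] := grad_f (t *: v + x).
pose line : R^o -> ('rV[R]_d : normedModType R) := ( *:%R^~ v) + cst x.
have dline : is_diff (t : R^o) line (( *:%R^~ v) + 0) by exact: is_diffD.
have dphi : differentiable (f \o line) (t : R^o) by exact: differentiable_comp.
apply: DeriveDef; first exact: diff_derivable.
by rewrite deriveE // diff_comp // /= diff_val !fctE scale1r addr0 dfE.
Qed.

(* The mean value theorem gives the constant [L] rather than the optimal [L / 2];
   this is enough here. *)
Lemma L_smooth_descent {L : R} {f gradf} x v : L_smooth L f gradf -> 0 < L ->
  f (x + v) <= f x + dotv (gradf x) v + L * sqnorm v.
Proof.
move=> smooth_f L_gt0.
have [c /andP[c_gt0 c_lt1]] : exists2 c, c \in `]0, 1[%R &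
    f (1 *: v + x) - f (0 *: v + x) = dotv (gradf (c *: v + x)) v * (1 - 0).
  apply: (MVT (f := fun s : R => f (s *: v + x))) => [|t _|]; first exact: ltr01.
    exact: is_derive_line smooth_f.1.
  apply: derivable_within_continuous => t _.
  by have [] := is_derive_line x v t smooth_f.1.
rewrite scale1r scale0r add0r subr0 mulr1 (addrC v x) => mvt.
set a := gradf (c *: v + x) - gradf x.
have le_a : sqnorm a <= L ^+ 2 * sqnorm v.
  apply: le_trans (L_smooth_sqnorm_grad (c *: v + x) x smooth_f (ltW L_gt0)) _.
  rewrite addrK sqnormZ mulrA ler_wpM2r ?sqnorm_ge0 // ler_piMr ?sqr_ge0 //.
  by rewrite expr_le1 ?ltW.
have le_av : dotv a v <= L * sqnorm v.
  have := dotv_young 1 (- L) a v; rewrite expr1n mul1r sqrrN => young.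
  rewrite -(ler_pM2l L_gt0); lra.
have : dotv (gradf (c *: v + x)) v = dotv (gradf x) v + dotv a v by rewrite dotvBl; ring.
lra.
Qed.

End Euclidean.

Section ErealSup.
Local Open Scope ereal_scope.
Context {R : realType}.

Lemma ereal_supD_le (A B : set (\bar R)) (c : \bar R) : A 0 -> B 0 ->
  (forall x y, A x -> B y -> x + y <= c) -> ereal_sup A + ereal_sup B <= c.
Proof.
move=> A0 B0 AB_le.
have supA_le : ereal_sup A <= c.
  by apply: ge_ereal_sup => x Ax; rewrite -[x]adde0; exact: AB_le.
have supB_le : ereal_sup B <= c.
  by apply: ge_ereal_sup => y By; rewrite -[y]add0e; exact: AB_le.
have supA_ge0 : 0 <= ereal_sup A by exact: ereal_sup_ubound.
have supB_ge0 : 0 <= ereal_sup B by exact: ereal_sup_ubound.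
case: c AB_le supA_le supB_le => [r| |] AB_le supA_le supB_le; last 2 first.
- by rewrite leey.
- by move: (le_trans supA_ge0 supA_le).
case Ea : (ereal_sup A) supA_ge0 supA_le => [a| |] // _ _.
case Eb : (ereal_sup B) supB_ge0 supB_le => [b| |] // _ _.
rewrite -EFinD lee_fin leNgt; apply/negP => r_lt.
pose e := ((a + b - r) / 2)%R.
have e_gt0 : (0 < e)%R by rewrite /e; lra.
have [x Ax ltx] : exists2 x, A x & (a - e)%:E < x.
  by apply: ereal_sup_gt; rewrite Ea lte_fin; lra.
have [y By lty] : exists2 y, B y & (b - e)%:E < y.
  by apply: ereal_sup_gt; rewrite Eb lte_fin; lra.
have := lt_le_trans (lteD ltx lty) (AB_le _ _ Ax By).
by rewrite -EFinD lte_fin /e; lra.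
Qed.

End ErealSup.

(* No measurability is assumed: the integral of a nonnegative function is the
   supremum of the integrals of the simple functions below it.  The iterated
   expectations [la_expect] are not known to be measurable. *)
Section NonnegIntegral.
Local Open Scope ereal_scope.
Context {R : realType} {dT : measure_display} {T : measurableType dT}.
Variable mu : {measure set T -> \bar R}.
Import HBNNSimple.

Lemma ge0_le_integral_any (f g : T -> \bar R) :
  (forall x, 0 <= f x) -> (forall x, f x <= g x) ->
  \int[mu]_x f x <= \int[mu]_x g x.
Proof.
move=> f_ge0 fg; have g_ge0 x : 0 <= g x by exact: le_trans (f_ge0 x) (fg x).
rewrite !ge0_integralTE //; apply: ereal_sup_le => _ [h hf <-].
by exists h => // x; exact: le_trans (hf x) (fg x).
Qed.

Lemma ge0_integralD_ge (f g : T -> \bar R) :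
  (forall x, 0 <= f x) -> (forall x, 0 <= g x) ->
  \int[mu]_x f x + \int[mu]_x g x <= \int[mu]_x (f x + g x).
Proof.
move=> f_ge0 g_ge0.
rewrite !ge0_integralTE // => [|x]; last by rewrite adde_ge0.
apply: ereal_supD_le; try by exists nnsfun0 => //; exact: sintegral0.
move=> _ _ [h1 h1f <-] [h2 h2g <-]; apply: ereal_sup_ubound.
exists (add_nnsfun h1 h2) => [x|]; first by rewrite /= EFinD leeD.
by rewrite sintegralD.
Qed.

Lemma ge0_integral_sum_ge (F : nat -> T -> \bar R) n :
  (forall j x, 0 <= F j x) ->
  \sum_(j < n) \int[mu]_x F j x <= \int[mu]_x (\sum_(j < n) F j x).
Proof.
move=> F_ge0; elim: n => [|n IHn].
  by rewrite big_ord0; apply: integral_ge0 => x _; rewrite big_ord0.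
rewrite big_ord_recr /=; apply: le_trans (leeD IHn (lexx _)) _.
have sum_ge0 x : 0 <= \sum_(j < n) F j x by apply: sume_ge0 => j _.
apply: le_trans (ge0_integralD_ge _ _ sum_ge0 (F_ge0 n)) _.
by apply: ge0_le_integral_any => x; rewrite ?big_ord_recr ?adde_ge0 ?sume_ge0.
Qed.

End NonnegIntegral.

Section CenteredNoise.
Context {R : realType} {d : nat} {dX : measure_display} {Xi : measurableType dX}.
Context {mu : probability Xi R} {g : Xi -> 'rV[R]_d} {m : 'rV[R]_d}.
Hypothesis g_mean : forall i : 'I_d,
  mu.-integrable setT (fun xi => (g xi ord0 i)%:E) /\
  (\int[mu]_xi (g xi ord0 i)%:E = (m ord0 i)%:E)%E.

Let integrable_cst (c : R) : mu.-integrable setT (fun _ => c%:E).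
Proof. exact: finite_measure_integrable_cst. Qed.

Let expectation_cst (c : R) : (\int[mu]_xi c%:E = c%:E)%E.
Proof.
rewrite integral_cst // [X in (_ * X)%E](_ : _ = 1%E) ?mule1 //.
exact: probability_setT.
Qed.

Let centered i xi := g xi ord0 i - m ord0 i.

Let integrable_centered i : mu.-integrable setT (fun xi => (centered i xi)%:E).
Proof.
have := integrableB measurableT (g_mean i).1 (integrable_cst (m ord0 i)).
by apply: eq_integrable => // xi _; rewrite /centered EFinB.
Qed.

Let integral_centered i : (\int[mu]_xi (centered i xi)%:E = 0)%E.
Proof.
under eq_integral do rewrite EFinB.
rewrite integralB_EFin //; last exact: integrable_cst.
  by rewrite (g_mean i).2 expectation_cst subee.
exact: (g_mean i).1.
Qed.

Let dotv_centered (A : 'rV[R]_d) xi :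
  dotv A (g xi - m) = \sum_(i <- enum 'I_d) A ord0 i * centered i xi.
Proof. by rewrite big_enum; apply: eq_bigr => i _; rewrite !mxE. Qed.

Let integrable_scaled_centered (A : 'rV[R]_d) i :
  mu.-integrable setT (fun xi => ((A ord0 i)%:E * (centered i xi)%:E)%E).
Proof. exact: integrableZl. Qed.

Lemma integrable_dotv_centered (A : 'rV[R]_d) :
  mu.-integrable setT (fun xi => (dotv A (g xi - m))%:E).
Proof.
have := integrable_sum measurableT (enum 'I_d) (P := xpredT)
  (fun i _ => integrable_scaled_centered A i).
by apply: eq_integrable => // xi _; rewrite dotv_centered -sumEFin.
Qed.

Lemma integral_dotv_centered (A : 'rV[R]_d) :
  (\int[mu]_xi (dotv A (g xi - m))%:E = 0)%E.
Proof.
under eq_integral do rewrite dotv_centered -sumEFin.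
rewrite integral_sum // => [|i]; last exact: integrable_scaled_centered.
rewrite big1 // => i _.
by under eq_integral do rewrite EFinM; rewrite integralZl // integral_centered mule0.
Qed.

Lemma measurable_sqnorm_centered : measurable_fun setT (fun xi => sqnorm (g xi - m)).
Proof.
have -> : (fun xi => sqnorm (g xi - m)) =
    (fun xi => \sum_(i <- enum 'I_d) centered i xi * centered i xi).
  by apply: funext => xi; rewrite big_enum; apply: eq_bigr => i _; rewrite !mxE.
apply: measurable_sum => i; apply: measurable_funM;
  exact/measurable_EFinP/(measurable_int mu (integrable_centered i)).
Qed.

Context {sigma : R}.
Hypothesis g_var : (\int[mu]_xi (sqnorm (g xi - m))%:E <= (sigma ^+ 2)%:E)%E.

Lemma integrable_sqnorm_centered :
  mu.-integrable setT (fun xi => (sqnorm (g xi - m))%:E).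
Proof.
apply/integrableP; split.
  exact/measurable_EFinP/measurable_sqnorm_centered.
under eq_integral do rewrite gee0_abs ?lee_fin ?sqnorm_ge0 //.
by apply: le_lt_trans g_var _; rewrite ltry.
Qed.

Lemma integral_quadratic_centered_le (b0 b1 : R) (A : 'rV[R]_d) : 0 <= b1 ->
  (\int[mu]_xi (b0 + dotv A (g xi - m) + b1 * sqnorm (g xi - m))%:E
     <= (b0 + b1 * sigma ^+ 2)%:E)%E.
Proof.
move=> b1_ge0; under eq_integral do rewrite !EFinD EFinM.
have int_cst := integrable_cst b0.
have int_dotv := integrable_dotv_centered A.
have int_sqnorm := integrable_sqnorm_centered.
rewrite integralD //; last exact: integrableZl.
  rewrite (integralD measurableT int_cst int_dotv) expectation_cst.
  rewrite integral_dotv_centered adde0 integralZl //.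
  by rewrite EFinD leeD2l // EFinM lee_wpmul2l.
exact: integrableD.
Qed.

End CenteredNoise.

Lemma quadratic_split {R : realType} {d : nat} (a c b t : R) (p r e v : 'rV[R]_d) :
  - a * dotv p (r + e) + c * sqnorm (r + e) + b * sqnorm (v - t *: (r + e)) =
  - a * dotv p r + c * sqnorm r + b * sqnorm (v - t *: r)
  + dotv ((- a) *: p + (2 * c) *: r - (2 * b * t) *: (v - t *: r)) e
  + (c + b * t ^+ 2) * sqnorm e.
Proof.
have -> : v - t *: (r + e) = (v - t *: r) - t *: e by rewrite scalerDr opprD addrA.
set v' := v - t *: r.
rewrite (dotvBl ((- a) *: p + (2 * c) *: r)) dotvDl dotvDr sqnormD sqnormB.
rewrite sqnormZ dotvZr !dotvZl; ring.
Qed.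

Section LookaheadPotential.
Context {R : realType} {d : nat} {dX : measure_display} {Xi : measurableType dX}.
Context {mu : probability Xi R} {f : 'rV[R]_d -> R} {gradf : 'rV[R]_d -> 'rV[R]_d}.
Context {G : 'rV[R]_d -> Xi -> 'rV[R]_d} {L infF sigma alpha gamma : R} {k : nat}.
Hypotheses (L_gt0 : 0 < L) (smooth_f : L_smooth L f gradf) (infF_le : forall x, infF <= f x).
Hypothesis G_unbiased : forall (w : 'rV[R]_d) (i : 'I_d),
  mu.-integrable setT (fun xi => (G w xi ord0 i)%:E) /\
  (\int[mu]_xi (G w xi ord0 i)%:E = (gradf w ord0 i)%:E)%E.
Hypothesis G_var : forall w : 'rV[R]_d,
  (\int[mu]_xi (sqnorm (G w xi - gradf w))%:E <= (sigma ^+ 2)%:E)%E.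
Hypotheses (k_gt0 : (0 < k)%N) (alpha_gt0 : 0 < alpha) (alpha_le1 : alpha <= 1).
Hypotheses (gamma_gt0 : 0 < gamma) (gamma_le : L * gamma <= 1 / 8).
Hypothesis gamma_le_k : (k.-1)%:R * gamma * L * (1 - alpha) <= 1 / 4.

Implicit Types (s : 'rV[R]_d * 'rV[R]_d) (m : nat) (xi : Xi).

Let step m s xi := la_step G k alpha gamma m s xi.

Let lookahead s := s.1 + alpha *: (s.2 - s.1).
Let drift s := s.2 - s.1.

(* The weight [beta j] of the drift after [j] inner steps decreases by
   [gamma * kappa] per step; this decrease pays for the drift terms of
   [grad_gap_le] and [drift_cross_le]. *)
Let kappa : R := 2 * alpha * L ^+ 2 * (1 - alpha) ^+ 2.
Let beta (j : nat) : R := (k - j)%:R * gamma * kappa.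

Let potential s m : R :=
  f (lookahead s) - infF + beta (m %% k) * sqnorm (drift s).

Let kappa_ge0 : 0 <= kappa.
Proof. by rewrite /kappa !mulr_ge0 ?sqr_ge0 ?subr_ge0 // ltW. Qed.

Let beta_ge0 j : 0 <= beta j.
Proof. by rewrite /beta mulr_ge0 // mulr_ge0 // ltW. Qed.

Let beta_le j : (0 < j)%N -> beta j <= (k.-1)%:R * gamma * kappa.
Proof.
move=> j_gt0; rewrite /beta -!mulrA; apply: ler_wpM2r.
  by rewrite mulr_ge0 // ltW.
by rewrite ler_nat -subn1 leq_sub2l.
Qed.

Let beta_succ j : (j < k)%N -> beta j = beta j.+1 + gamma * kappa.
Proof.
by move=> jk; rewrite /beta subnS -[(k - j)%N]prednK ?subn_gt0 //= -addn1 natrD; ring.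
Qed.

Let potential_ge0 s m : 0 <= potential s m.
Proof. by rewrite /potential addr_ge0 ?subr_ge0 // mulr_ge0 ?sqnorm_ge0. Qed.

Let lookahead_step m s xi :
  lookahead (step m s xi) = lookahead s - (alpha * gamma) *: G s.2 xi.
Proof.
rewrite /step /la_step /lookahead; case: ifP => _ /=; rewrite ?subrr ?scaler0 ?addr0;
  by rewrite addrAC scalerBr addrA scalerA.
Qed.

Let potential_step_le m s xi :
  potential (step m s xi) m.+1 <=
  f (lookahead s - (alpha * gamma) *: G s.2 xi) - infF
  + beta (m %% k).+1 * sqnorm (drift s - gamma *: G s.2 xi).
Proof.
rewrite /potential lookahead_step lerD2l /step /la_step /drift.
case: ifP => sync /=; first by rewrite subrr sqnorm0 mulr0 mulr_ge0 ?sqnorm_ge0.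
by rewrite modnS sync addrAC.
Qed.

Let beta' m := beta (m %% k).+1.
Let noise s xi := G s.2 xi - gradf s.2.

(* By the descent lemma, the potential after a step is bounded by a quadratic
   polynomial in the gradient noise [noise s xi], with these coefficients. *)
Let noise_free m s : R :=
  f (lookahead s) - infF - alpha * gamma * dotv (gradf (lookahead s)) (gradf s.2)
  + L * (alpha * gamma) ^+ 2 * sqnorm (gradf s.2)
  + beta' m * sqnorm (drift s - gamma *: gradf s.2).

Let noise_lin m s : 'rV[R]_d :=
  (- (alpha * gamma)) *: gradf (lookahead s) + (2 * (L * (alpha * gamma) ^+ 2)) *: gradf s.2
  - (2 * beta' m * gamma) *: (drift s - gamma *: gradf s.2).

Let noise_sq m : R := L * (alpha * gamma) ^+ 2 + beta' m * gamma ^+ 2.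

Let potential_step_quadratic m s xi :
  potential (step m s xi) m.+1 <=
  noise_free m s + dotv (noise_lin m s) (noise s xi) + noise_sq m * sqnorm (noise s xi).
Proof.
apply: le_trans (potential_step_le m s xi) _.
set e := noise s xi; have -> : G s.2 xi = gradf s.2 + e by rewrite addrC subrK.
have := L_smooth_descent (lookahead s) ((- (alpha * gamma)) *: (gradf s.2 + e)) smooth_f L_gt0.
rewrite dotvZr sqnormZ sqrrN scaleNr => descent.
have := quadratic_split (alpha * gamma) (L * (alpha * gamma) ^+ 2) (beta' m) gamma
  (gradf (lookahead s)) (gradf s.2) e (drift s).
rewrite /noise_free /noise_lin /noise_sq -/(beta' m); lra.
Qed.

Let rate : R := alpha * gamma / 4.
Let noise_floor : R :=
  gamma ^+ 2 * sigma ^+ 2 * (L * alpha ^+ 2 + (k.-1)%:R * gamma * kappa).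

Let beta'_ge0 m : 0 <= beta' m.
Proof. exact: beta_ge0. Qed.

Let beta'_le m : beta' m <= (k.-1)%:R * gamma * kappa.
Proof. exact: beta_le. Qed.

Let two_beta'_le m : 2 * beta' m <= alpha * L * (1 - alpha).
Proof.
apply: le_trans (_ : 2 * ((k.-1)%:R * gamma * kappa) <= _).
  by rewrite ler_pM2l ?ltr0n.
have -> : 2 * ((k.-1)%:R * gamma * kappa) =
    (alpha * L * (1 - alpha)) * (4 * ((k.-1)%:R * gamma * L * (1 - alpha))).
  by rewrite /kappa; ring.
rewrite ler_piMr ?mulr_ge0 ?subr_ge0 ?(ltW alpha_gt0) ?(ltW L_gt0) //.
by move: gamma_le_k; lra.
Qed.

Let noise_sq_le m : noise_sq m <= alpha * gamma / 4.
Proof.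
have alpha_gamma_ge0 : 0 <= alpha * gamma by rewrite mulr_ge0 ?ltW.
have a1_ge0 : 0 <= 1 - alpha by rewrite subr_ge0.
have Lgamma_ge0 : 0 <= L * gamma by rewrite mulr_ge0 ?ltW.
have first_le : L * (alpha * gamma) ^+ 2 <= alpha * gamma / 8.
  have -> : L * (alpha * gamma) ^+ 2 = (alpha * gamma) * (alpha * (L * gamma)) by ring.
  have : alpha * (L * gamma) <= 1 / 8 by move: alpha_le1 gamma_le; nra.
  by move/(ler_wpM2l alpha_gamma_ge0); lra.
have second_le : beta' m * gamma ^+ 2 <= alpha * gamma / 8.
  apply: le_trans (ler_wpM2r (sqr_ge0 gamma) (beta'_le m)) _.
  have -> : (k.-1)%:R * gamma * kappa * gamma ^+ 2 = (alpha * gamma) *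
      (2 * (((k.-1)%:R * gamma * L * (1 - alpha)) * (L * gamma * (1 - alpha)))).
    by rewrite /kappa; ring.
  have : ((k.-1)%:R * gamma * L * (1 - alpha)) * (L * gamma * (1 - alpha)) <= 1 / 32.
    have : 0 <= (k.-1)%:R * gamma * L * (1 - alpha).
      by rewrite mulr_ge0 // mulr_ge0 ?(ltW L_gt0) // mulr_ge0 ?(ltW gamma_gt0).
    have : L * gamma * (1 - alpha) <= 1 / 8 by move: alpha_gt0 gamma_le; nra.
    by move: gamma_le_k; nra.
  move=> le32; have : 2 * (((k.-1)%:R * gamma * L * (1 - alpha)) * (L * gamma * (1 - alpha)))
      <= 1 / 8 by lra.
  by move/(ler_wpM2l alpha_gamma_ge0); lra.
by rewrite /noise_sq; lra.
Qed.

Let noise_sq_var_le m : noise_sq m * sigma ^+ 2 <= noise_floor.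
Proof.
have : noise_sq m <= gamma ^+ 2 * (L * alpha ^+ 2 + (k.-1)%:R * gamma * kappa).
  by have := ler_wpM2r (sqr_ge0 gamma) (beta'_le m); rewrite /noise_sq exprMn; lra.
by move/(ler_wpM2r (sqr_ge0 sigma)); rewrite /noise_floor; lra.
Qed.

Let grad_gap_le s :
  - dotv (gradf (lookahead s) - gradf s.2) (gradf s.2) <=
  L ^+ 2 * (1 - alpha) ^+ 2 * sqnorm (drift s) + sqnorm (gradf s.2) / 4.
Proof.
have lookahead_sub : lookahead s - s.2 = (- (1 - alpha)) *: drift s.
  by rewrite /lookahead /drift scaleNr scalerBl scale1r opprB opprB addrAC addrC.
have := L_smooth_sqnorm_grad (lookahead s) s.2 smooth_f (ltW L_gt0).
rewrite lookahead_sub sqnormZ sqrrN mulrA => gap_le.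
by have := dotv_young 1 (1 / 2) (gradf (lookahead s) - gradf s.2) (gradf s.2); lra.
Qed.

Let drift_cross_le m s :
  - (2 * beta' m * dotv (drift s) (gradf s.2)) <=
  alpha * L ^+ 2 * (1 - alpha) ^+ 2 * sqnorm (drift s) + alpha * sqnorm (gradf s.2) / 4.
Proof.
have q_ge0 := sqnorm_ge0 (drift s).
have beta'_sq_le : 16 * beta' m ^+ 2 <= 4 * (alpha * L * (1 - alpha)) ^+ 2.
  have := two_beta'_le m; have := beta'_ge0 m; nra.
rewrite -(ler_pM2l (_ : 0 < 4 * alpha)) ?mulr_gt0 //.
have := ler_wpM2r q_ge0 beta'_sq_le.
have := dotv_young (4 * beta' m) alpha (drift s) (gradf s.2).
rewrite !exprMn; lra.
Qed.

Let noise_free_le m s :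
  noise_free m s + noise_sq m * sigma ^+ 2 <=
  potential s m - rate * sqnorm (gradf s.2) + noise_floor.
Proof.
set gr := gradf s.2; set gp := gradf (lookahead s); set u := drift s.
have beta_split : beta (m %% k) = beta' m + gamma * kappa.
  by apply: beta_succ; rewrite ltn_pmod.
have dotv_split : dotv gp gr = sqnorm gr + dotv (gp - gr) gr.
  by rewrite dotvBl /sqnorm; ring.
have sqnorm_split : sqnorm (u - gamma *: gr) =
    sqnorm u - 2 * gamma * dotv u gr + gamma ^+ 2 * sqnorm gr.
  by rewrite sqnormB sqnormZ dotvZr mulrA.
have alpha_gamma_ge0 : 0 <= alpha * gamma by rewrite mulr_ge0 ?ltW.
have gap_le := ler_wpM2l alpha_gamma_ge0 (grad_gap_le s).
have cross_le := ler_wpM2l (ltW gamma_gt0) (drift_cross_le m s).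
have sq_le := ler_wpM2r (sqnorm_ge0 gr) (noise_sq_le m).
move: (noise_sq_var_le m) gap_le cross_le sq_le.
rewrite /noise_free /potential -/u -/gp -/gr beta_split sqnorm_split dotv_split.
rewrite /noise_sq /rate /kappa; lra.
Qed.

Let rate_gt0 : 0 < rate.
Proof. by rewrite /rate !mulr_gt0. Qed.

Let noise_sq_ge0 m : 0 <= noise_sq m.
Proof.
by apply: addr_ge0; apply: mulr_ge0; rewrite ?sqr_ge0 ?beta'_ge0 ?(ltW L_gt0).
Qed.

Let expected_potential_step_le m s (F : Xi -> \bar R) (a : R) :
  (forall xi, 0 <= F xi)%E ->
  (forall xi, F xi <= ((potential (step m s xi) m.+1 + a) / rate)%:E)%E ->
  (\int[mu]_xi F xi <=
    ((potential s m - rate * sqnorm (gradf s.2) + noise_floor + a) / rate)%:E)%E.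
Proof.
move=> F_ge0 F_le.
pose quad xi := (noise_free m s + a) / rate + dotv (rate^-1 *: noise_lin m s) (noise s xi)
  + noise_sq m / rate * sqnorm (noise s xi).
apply: (@le_trans _ _ (\int[mu]_xi (quad xi)%:E)%E).
  apply: ge0_le_integral_any => // xi; apply: le_trans (F_le xi) _.
  have -> : quad xi = (noise_free m s + dotv (noise_lin m s) (noise s xi)
      + noise_sq m * sqnorm (noise s xi) + a) / rate.
    by rewrite /quad dotvZl; field; rewrite gt_eqF.
  rewrite lee_fin ler_wpM2r ?invr_ge0 ?(ltW rate_gt0) //.
  by have := potential_step_quadratic m s xi; lra.
have sq_ge0 := divr_ge0 (noise_sq_ge0 m) (ltW rate_gt0).
apply: le_trans (integral_quadratic_centered_le (G_unbiased s.2) (G_var s.2)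
  ((noise_free m s + a) / rate) _ (rate^-1 *: noise_lin m s) sq_ge0) _.
have -> : (noise_free m s + a) / rate + noise_sq m / rate * sigma ^+ 2 =
    (noise_free m s + noise_sq m * sigma ^+ 2 + a) / rate.
  by field; rewrite gt_eqF.
rewrite lee_fin ler_wpM2r ?invr_ge0 ?(ltW rate_gt0) //.
by have := noise_free_le m s; lra.
Qed.

Let sqgrad s : \bar R := (sqnorm (gradf s.2))%:E.

Let la_expect_ge0 n m s : (0 <= la_expect mu G k alpha gamma sqgrad n m s)%E.
Proof.
elim: n m s => [|n IHn] m s /=; first by rewrite lee_fin sqnorm_ge0.
by apply: integral_ge0 => xi _; exact: IHn.
Qed.

Let sum_la_expect_le N m s :
  (\sum_(j < N) la_expect mu G k alpha gamma sqgrad j m s <=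
    ((potential s m + N%:R * noise_floor) / rate)%:E)%E.
Proof.
elim: N m s => [|N IHN] m s.
  by rewrite big_ord0 lee_fin mul0r addr0 divr_ge0 ?(ltW rate_gt0).
rewrite big_ord_recl /=.
set F := fun j xi => la_expect mu G k alpha gamma sqgrad j m.+1 (step m s xi).
apply: le_trans (leeD (lexx _) (ge0_integral_sum_ge mu F N _)) _.
  by move=> j xi; exact: la_expect_ge0.
apply: le_trans (leeD (lexx _) (expected_potential_step_le m s _ (N%:R * noise_floor) _ _)) _.
- by move=> xi; apply: sume_ge0 => j _; exact: la_expect_ge0.
- by move=> xi; exact: IHN.
rewrite /sqgrad -EFinD lee_fin le_eqVlt; apply/orP; left; apply/eqP.
by rewrite -natr1; field; rewrite gt_eqF.
Qed.

Lemma la_out_sqgrad_le w0 T :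
  (la_out_sqgrad mu G gradf k alpha gamma w0 T <=
    ((T%:R)^-1 * ((f w0 - infF + T%:R * noise_floor) / rate))%:E)%E.
Proof.
rewrite /la_out_sqgrad EFinM lee_wpmul2l ?lee_fin ?invr_ge0 ?ler0n //.
have := sum_la_expect_le T 0 (w0, w0).
by rewrite /potential /lookahead /drift /= !subrr scaler0 addr0 sqnorm0 mulr0 addr0.
Qed.

End LookaheadPotential.

Definition la_scale {R : realType} (L sigma alpha eps : R) (k : nat) : R :=
  8 * L + 4 * (k.-1)%:R * L * (1 - alpha) + 12 * L * alpha * sigma ^+ 2 / eps
  + 5 * L * sigma * (1 - alpha) * Num.sqrt (k.-1)%:R / Num.sqrt eps.

Section StepsizeChoice.
Context {R : realType} {L sigma alpha eps : R} {k : nat}.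
Hypotheses (L_gt0 : 0 < L) (sigma_ge0 : 0 <= sigma) (k_gt0 : (0 < k)%N).
Hypotheses (alpha_gt0 : 0 < alpha) (alpha_le1 : alpha <= 1) (eps_gt0 : 0 < eps).

Let S := la_scale L sigma alpha eps k.
Let gamma := S^-1.
Let K1 : R := (k.-1)%:R.

Let a1_ge0 : 0 <= 1 - alpha. Proof. by rewrite subr_ge0. Qed.

Let drift_term_ge0 : 0 <= 4 * K1 * L * (1 - alpha).
Proof. by rewrite !mulr_ge0 // ltW. Qed.

Let variance_term_ge0 : 0 <= 12 * L * alpha * sigma ^+ 2 / eps.
Proof. by rewrite divr_ge0 ?(ltW eps_gt0) // !mulr_ge0 ?sqr_ge0 // ltW. Qed.

Let cross_term_ge0 : 0 <= 5 * L * sigma * (1 - alpha) * Num.sqrt K1 / Num.sqrt eps.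
Proof. by rewrite divr_ge0 ?sqrtr_ge0 // !mulr_ge0 ?sqrtr_ge0 // ltW. Qed.

Let S_split : S = 8 * L + 4 * K1 * L * (1 - alpha) + 12 * L * alpha * sigma ^+ 2 / eps
  + 5 * L * sigma * (1 - alpha) * Num.sqrt K1 / Num.sqrt eps.
Proof. by []. Qed.

Let S_gt0 : 0 < S.
Proof.
move: drift_term_ge0 variance_term_ge0 cross_term_ge0 L_gt0; rewrite S_split; lra.
Qed.

Let gamma_S : gamma * S = 1.
Proof. by rewrite mulVf // gt_eqF. Qed.

Lemma la_stepsize_gt0 : 0 < gamma.
Proof. by rewrite invr_gt0. Qed.

Lemma la_stepsize_L_le : L * gamma <= 1 / 8.
Proof.
have : 8 * L <= S.
  by move: drift_term_ge0 variance_term_ge0 cross_term_ge0; rewrite S_split; lra.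
by move/(ler_wpM2r (ltW la_stepsize_gt0)); rewrite [S * _]mulrC gamma_S; lra.
Qed.

Lemma la_stepsize_Lk_le : K1 * gamma * L * (1 - alpha) <= 1 / 4.
Proof.
have : 4 * K1 * L * (1 - alpha) <= S.
  by move: variance_term_ge0 cross_term_ge0 L_gt0; rewrite S_split; lra.
by move/(ler_wpM2r (ltW la_stepsize_gt0)); rewrite [S * _]mulrC gamma_S; lra.
Qed.

Let variance_le : 12 * L * alpha * sigma ^+ 2 <= eps * S.
Proof.
have : 12 * L * alpha * sigma ^+ 2 / eps <= S.
  by move: drift_term_ge0 cross_term_ge0 L_gt0; rewrite S_split; lra.
by move/(ler_wpM2l (ltW eps_gt0)); rewrite mulrCA divff ?mulr1 // gt_eqF.
Qed.

Let cross_le : 25 * L ^+ 2 * sigma ^+ 2 * (1 - alpha) ^+ 2 * K1 <= eps * S ^+ 2.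
Proof.
set x := 5 * L * sigma * (1 - alpha) * Num.sqrt K1 / Num.sqrt eps.
have x_le : x <= S.
  by move: drift_term_ge0 variance_term_ge0 L_gt0; rewrite S_split -/x; lra.
have : x ^+ 2 <= S ^+ 2 by rewrite lerXn2r // ?nnegrE ?(ltW S_gt0).
have -> : x ^+ 2 = 25 * L ^+ 2 * sigma ^+ 2 * (1 - alpha) ^+ 2 * K1 / eps.
  rewrite /x expr_div_n !exprMn !sqr_sqrtr ?(ltW eps_gt0) //; ring.
by move/(ler_wpM2l (ltW eps_gt0)); rewrite mulrCA divff ?mulr1 // gt_eqF.
Qed.

Lemma la_average_bound_le (Delta Delta' : R) (T : nat) :
  0 <= Delta' <= Delta -> 12 * Delta * S / (alpha * eps) < T%:R ->
  (T%:R)^-1 * ((Delta' + T%:R * (gamma ^+ 2 * sigma ^+ 2 *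
      (L * alpha ^+ 2 + K1 * gamma * (2 * alpha * L ^+ 2 * (1 - alpha) ^+ 2))))
      / (alpha * gamma / 4)) <= eps.
Proof.
move=> /andP[Delta'_ge0 Delta'_le] T_gt.
have gamma_gt0 := la_stepsize_gt0.
have alpha_eps_gt0 : 0 < alpha * eps by rewrite mulr_gt0.
have T_gt0 : 0 < T%:R :> R.
  apply: le_lt_trans T_gt; rewrite divr_ge0 ?(ltW alpha_eps_gt0) //.
  by rewrite !mulr_ge0 ?(ltW S_gt0) // (le_trans Delta'_ge0).
have -> : (T%:R)^-1 * ((Delta' + T%:R * (gamma ^+ 2 * sigma ^+ 2 *
      (L * alpha ^+ 2 + K1 * gamma * (2 * alpha * L ^+ 2 * (1 - alpha) ^+ 2))))
      / (alpha * gamma / 4)) =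
    4 * Delta' * S / (alpha * T%:R) + 4 * (L * alpha * sigma ^+ 2) * gamma
    + 8 * (K1 * L ^+ 2 * (1 - alpha) ^+ 2 * sigma ^+ 2) * gamma ^+ 2.
  by rewrite /gamma; field; rewrite !gt_eqF.
have gap_le : 4 * Delta' * S / (alpha * T%:R) <= eps / 3.
  move: T_gt; rewrite ltr_pdivrMr // => T_gt.
  rewrite ler_pdivrMr ?mulr_gt0 //.
  have : Delta' * S <= Delta * S by rewrite ler_wpM2r ?(ltW S_gt0).
  lra.
have variance_gamma_le : 4 * (L * alpha * sigma ^+ 2) * gamma <= eps / 3.
  have := ler_wpM2r (ltW gamma_gt0) variance_le.
  by rewrite -[eps * S * gamma]mulrA [S * gamma]mulrC gamma_S; lra.
have cross_gamma_le :
    8 * (K1 * L ^+ 2 * (1 - alpha) ^+ 2 * sigma ^+ 2) * gamma ^+ 2 <= eps / 3.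
  have := ler_wpM2r (sqr_ge0 gamma) cross_le.
  rewrite -[eps * S ^+ 2 * _]mulrA -exprMn [S * gamma]mulrC gamma_S expr1n.
  by move: eps_gt0; lra.
lra.
Qed.

Let rho := (1 - alpha) / alpha.
Let x1 := sigma ^+ 2 / eps ^+ 2.
Let x2 := eps^-1.
Let x3 := sigma * Num.sqrt K1 / (eps * Num.sqrt eps).
Let x4 := k%:R / eps.

Let la_bound_split : la_bound sigma eps alpha k = x1 + x2 + rho * (x3 + x4).
Proof. by []. Qed.

Let rho_ge0 : 0 <= rho. Proof. by rewrite divr_ge0 ?(ltW alpha_gt0). Qed.
Let x1_ge0 : 0 <= x1. Proof. by rewrite divr_ge0 ?sqr_ge0. Qed.
Let x2_ge0 : 0 <= x2. Proof. by rewrite invr_ge0 ltW. Qed.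
Let x3_ge0 : 0 <= x3.
Proof. by rewrite divr_ge0 ?mulr_ge0 ?sqrtr_ge0 ?(ltW eps_gt0). Qed.
Let x4_ge0 : 0 <= x4. Proof. by rewrite divr_ge0 ?(ltW eps_gt0). Qed.

Let la_bound_ge0 : 0 <= la_bound sigma eps alpha k.
Proof. by rewrite la_bound_split !addr_ge0 // mulr_ge0 // addr_ge0. Qed.

Let scale_div_le : S / (alpha * eps) <= 12 * L * la_bound sigma eps alpha k.
Proof.
have -> : S / (alpha * eps) = 8 * L * (1 + rho) * x2 + 4 * L * rho * (K1 * x2)
    + 12 * L * x1 + 5 * L * rho * x3.
  by rewrite S_split /rho /x1 /x2 /x3; field; rewrite !gt_eqF ?sqrtr_gt0.
have x2_le : x2 <= x4.
  by rewrite /x2 /x4 -[X in X <= _]mul1r ler_wpM2r ?invr_ge0 ?(ltW eps_gt0) // ler1n.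
have K1x2_le : K1 * x2 <= x4.
  by rewrite /x2 /x4 ler_wpM2r ?invr_ge0 ?(ltW eps_gt0) // ler_nat leq_pred.
have Lrho_ge0 : 0 <= L * rho by rewrite mulr_ge0 ?(ltW L_gt0).
have := ler_wpM2l Lrho_ge0 x2_le; have := ler_wpM2l Lrho_ge0 K1x2_le.
have : 0 <= L * x2 by rewrite mulr_ge0 ?(ltW L_gt0).
have : 0 <= L * rho * x3 by rewrite mulr_ge0.
by rewrite la_bound_split; lra.
Qed.

Lemma la_iterations_le (Delta : R) : 0 <= Delta ->
  ((Num.truncn (12 * Delta * S / (alpha * eps))).+1)%:R
    <= (144 * L * Delta + 1) * la_bound sigma eps alpha k + 1.
Proof.
move=> Delta_ge0; set Y := 12 * Delta * S / (alpha * eps).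
have Y_ge0 : 0 <= Y.
  by rewrite divr_ge0 ?mulr_ge0 ?(ltW S_gt0) ?(ltW alpha_gt0) ?(ltW eps_gt0).
have trunc_le : ((Num.truncn Y).+1)%:R <= Y + 1 :> R.
  by rewrite -natr1 lerD2r truncn_le.
have : Y <= 12 * Delta * (12 * L * la_bound sigma eps alpha k).
  by rewrite /Y -mulrA ler_wpM2l ?mulr_ge0.
by move: la_bound_ge0; lra.
Qed.

End StepsizeChoice.

Theorem theorem1 (R : realType) (L Delta : R) :
  0 < L -> 0 <= Delta ->
  exists C : R, 0 < C /\
  forall (d : nat) (f : 'rV[R]_d -> R) (gradf : 'rV[R]_d -> 'rV[R]_d)
         (w0 : 'rV[R]_d)
         (dX : measure_display) (Xi : measurableType dX) (mu : probability Xi R)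
         (G : 'rV[R]_d -> Xi -> 'rV[R]_d) (sigma : R) (k : nat) (alpha eps : R),
    L_smooth L f gradf ->
    has_lbound (range f) ->
    f w0 - inf (range f) <= Delta ->
    (forall (i : 'I_d) (B : set R), measurable B ->
        <<s @prod_gen R d dX Xi >>
          ((fun p : Xi * 'rV[R]_d => G p.2 p.1 ord0 i) @^-1` B)) ->
    (forall (w : 'rV[R]_d) (i : 'I_d),
        mu.-integrable setT (fun xi => (G w xi ord0 i)%:E) /\
        (\int[mu]_xi (G w xi ord0 i)%:E = (gradf w ord0 i)%:E)%E) ->
    0 <= sigma ->
    (forall w : 'rV[R]_d,
        (\int[mu]_xi (sqnorm (G w xi - gradf w))%:E <= (sigma ^+ 2)%:E)%E) ->
    (1 <= k)%N -> 0 < alpha <= 1 -> 0 < eps ->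
    exists (gamma : R) (T : nat),
      0 < gamma /\ (0 < T)%N /\
      T%:R <= C * la_bound sigma eps alpha k + 1 /\
      (la_out_sqgrad mu G gradf k alpha gamma w0 T <= eps%:E)%E.
Proof.
move=> L_gt0 Delta_ge0; exists (144 * L * Delta + 1); split.
  by rewrite ltr_pwDr // !mulr_ge0 // ltW.
move=> d f gradf w0 dX Xi mu G sigma k alpha eps smooth_f f_lb gap_le _ G_unbiased
  sigma_ge0 G_var k_gt0 /andP[alpha_gt0 alpha_le1] eps_gt0.
have inf_le x : inf (range f) <= f x by apply: (ge_inf f_lb); exists x.
have gap_ge0 : 0 <= f w0 - inf (range f) by rewrite subr_ge0.
have gamma_gt0 := la_stepsize_gt0 (k := k) L_gt0 sigma_ge0 alpha_gt0 alpha_le1 eps_gt0.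
have gamma_le := la_stepsize_L_le (k := k) L_gt0 sigma_ge0 alpha_gt0 alpha_le1 eps_gt0.
have gamma_le_k := la_stepsize_Lk_le (k := k) L_gt0 sigma_ge0 alpha_gt0 alpha_le1 eps_gt0.
set S := la_scale L sigma alpha eps k in gamma_gt0 gamma_le gamma_le_k *.
exists S^-1, (Num.truncn (12 * Delta * S / (alpha * eps))).+1.
split => //; split => //; split; first exact: la_iterations_le.
apply: le_trans (la_out_sqgrad_le L_gt0 smooth_f inf_le G_unbiased G_var k_gt0 alpha_gt0
  alpha_le1 gamma_gt0 gamma_le gamma_le_k w0 _) _.
rewrite lee_fin (la_average_bound_le L_gt0 sigma_ge0 alpha_gt0 alpha_le1 eps_gt0 Delta) //.
  by rewrite gap_ge0.
exact: truncnS_gt.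
Qed.
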